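(* Let $m,n$ be even positive integers and let $f$ be the partial Boolean function on $2mn$ bits defined in the context. Then the nondeterministic quantum query complexity of $f$ satisfies $NQ(f)=\min(n/2,m/2)+1$.
   Context: For $z\in\{0,1\}^k$ let $w(z)$ denote its Hamming weight. Let $\mathcal{A}_1=\{0^m y : y\in\{0,1\}^m,\ m/2\le w(y)\le m\}$ and $\mathcal{A}_0=\{y0^m : y\in\{0,1\}^m,\ m/2\le w(y)\le m\}$. A string $x\in\{0,1\}^{2mn}$ is viewed as $n$ consecutive blocks of $2m$ bits. Define $\mathcal{X}_1=\mathcal{A}_0\times\cdots\times\mathcal{A}_0$ ($n$ factors) and $\mathcal{X}_0=\bigcup\{\mathcal{A}_{y_1}\times\cdots\times\mathcal{A}_{y_n} : y\in\{0,1\}^n,\ w(y)=n/2\}$. The partial function $f$ has domain $\mathcal{X}_0\cup\mathcal{X}_1$ with $f(x)=1$ on $\mathcal{X}_1$ and $f(x)=0$ on $\mathcal{X}_0$ (it is the composition of the Deutsch–Jozsa constant-vs-balanced function on $n$ bits with $n$ copies of the partial function $h$ on $2m$ bits that is $1$ on $\mathcal{A}_1$ and $0$ on $\mathcal{A}_0$). Quantum query model: the input $x\in\{0,1\}^N$ is accessed via the unitary $O_x:|i,b,z\rangle\mapsto|i,b\oplus x_i,z\rangle$; a $T$-query algorithm is $U_TO_xU_{T-1}\cdots O_xU_1O_xU_0$ applied to $|0\rangle$, with fixed unitaries $U_k$, followed by a measurement giving output $0$, $1$, or ''don't know''. A nondeterministic quantum algorithm for $f$ outputs $1$ with positive probability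 on every $x\in\mathcal{X}_1$ and with probability $0$ on every $x\in\mathcal{X}_0$. $NQ(f)$ is the minimal number of queries of such an algorithm. *)

From mathcomp Require Import all_boot all_order all_algebra.
From mathcomp Require Import Rstruct complex.
Set Implicit Arguments. Unset Strict Implicit. Unset Printing Implicit Defensive.
Import Order.TTheory GRing.Theory Num.Theory.

(* bit k of an input x : 'I_N -> bool (false outside the range; never used there) *)
Definition bitx (N : nat) (x : 'I_N -> bool) (k : nat) : bool :=
  if (insub k : option 'I_N) is Some i then x i else false.

Definition block (m N : nat) (x : 'I_N -> bool) (j : nat) : nat -> bool :=
  fun p => bitx x (j * (2 * m) + p).

Definition inA1 (m : nat) (z : nat -> bool) : bool :=
  [forall p : 'I_m, ~~ z p] &&
  (m %/ 2 <= \sum_(p < m) (z (m + p) : nat) <= m).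

Definition inA0 (m : nat) (z : nat -> bool) : bool :=
  [forall p : 'I_m, ~~ z (m + p)] &&
  (m %/ 2 <= \sum_(p < m) (z p : nat) <= m).

Definition inA (m : nat) (b : bool) (z : nat -> bool) : bool :=
  if b then inA1 m z else inA0 m z.

(* X_1 = A_0 x ... x A_0  (f = 1) *)
Definition X1 (m n : nat) (x : 'I_(2 * m * n) -> bool) : Prop :=
  forall j : 'I_n, inA0 m (block m x j).

(* X_0 = union over y of weight n/2 of A_{y_1} x ... x A_{y_n}  (f = 0) *)
Definition X0 (m n : nat) (x : 'I_(2 * m * n) -> bool) : Prop :=
  exists y : 'I_n -> bool,
    (\sum_(j < n) (y j : nat) = n %/ 2)%N /\
    forall j : 'I_n, inA m (y j) (block m x j).

Local Open Scope ring_scope.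

Definition C := (Rdefinitions.R)[i].

(* basis states |i, b, z> : query index, answer bit, workspace of dimension w *)
Definition basisT (N w : nat) : finType := ('I_N * bool * 'I_w)%type.

Definition dim (N w : nat) : nat := #|basisT N w|.

Definition ket (N w : nat) (s : basisT N w) : 'cV[C]_(dim N w) :=
  delta_mx (enum_rank s) 0.

Definition oflip (N w : nat) (x : 'I_N -> bool) (s : basisT N w) : basisT N w :=
  let: (i, b, z) := s in (i, addb b (x i), z).

Definition oracle (N w : nat) (x : 'I_N -> bool) : 'M[C]_(dim N w) :=
  \matrix_(r, c) ((enum_val r == oflip x (enum_val c))%:R).

Definition unitary (d : nat) (U : 'M[C]_d) : Prop :=
  U *m (map_mx Num.conj U)^T = 1%:M.

(* state after U_k O_x U_{k-1} ... O_x U_0 applied to the initial basis state s0 *)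
Fixpoint run (N w : nat) (U : nat -> 'M[C]_(dim N w)) (x : 'I_N -> bool)
    (s0 : basisT N w) (k : nat) : 'cV[C]_(dim N w) :=
  match k with
  | 0 => U 0%N *m @ket N w s0
  | k'.+1 => U k *m (@oracle N w x *m @run N w U x s0 k')
  end.

(* probability that the final computational-basis measurement, followed by the
   classical labelling out (Some b = output b, None = "don't know"), outputs 1 *)
Definition prob_out1 (N w : nat) (U : nat -> 'M[C]_(dim N w)) (out : basisT N w -> option bool)
    (x : 'I_N -> bool) (s0 : basisT N w) (T : nat) : C :=
  \sum_(s : basisT N w | out s == Some true) `|run U x s0 T (enum_rank s) 0| ^+ 2.

Definition NQ_alg (N : nat) (F1 F0 : ('I_N -> bool) -> Prop) (T : nat) : Prop :=
  exists (w : nat) (s0 : basisT N w) (U : nat -> 'M[C]_(dim N w))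
         (out : basisT N w -> option bool),
    (forall k, (k <= T)%N -> unitary (U k)) /\
    (forall x, F1 x -> 0 < prob_out1 U out x s0 T) /\
    (forall x, F0 x -> prob_out1 U out x s0 T = 0).

Definition NQ_is (N : nat) (F1 F0 : ('I_N -> bool) -> Prop) (q : nat) : Prop :=
  NQ_alg F1 F0 q /\ forall T, NQ_alg F1 F0 T -> (q <= T)%N.

From Pilot Require Import Defs.
From mathcomp Require Import all_boot all_order all_algebra.
From mathcomp Require Import Rstruct complex.
From Stdlib Require Import FunctionalExtensionality.
From mathcomp Require Import zify.
Set Implicit Arguments. Unset Strict Implicit. Unset Printing Implicit Defensive.
Import Order.TTheory GRing.Theory Num.Theory.

(* Lower bound (polynomial method): after T queries every amplitude is a
   multilinear polynomial of degree at most T in the input bits, and an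
   accepting amplitude of a nondeterministic algorithm vanishes on X_0.  For
   T <= min(n/2, m/2) the weight condition of each block can be removed one
   block at a time: flipping the m bits of its heavy half turns "at least m/2
   ones" into "at most m/2 ones", and a polynomial of degree <= m/2 vanishing
   on all inputs with few ones vanishes everywhere.  The remaining conditions
   only ask for zero halves; the monomials of degree <= n/2 that are nonzero
   on the input whose first halves are all ones touch at most n/2 blocks, so
   the other n/2 blocks can be declared A_1, and the amplitude vanishes on
   this X_1 input too.

   Upper bound: classical query paths run in superposition.  Testing one bit
   in each of n/2 + 1 blocks for a 1 finds a witness exactly on X_1; testing
   m/2 + 1 distinct bits of the second half of a block with sign +1 if all are
   0 and -1 otherwise gives +1 on A_0 and -1 on A_1, whose sum over the blocks
   vanishes exactly on balanced inputs. *)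

Lemma sum_bool_card k (b : 'I_k -> bool) : \sum_(p < k) b p = #|[set p | b p]|.
Proof.
by rewrite -sum1_card [RHS]big_mkcond /=; apply: eq_bigr => p _; rewrite inE; case: (b p).
Qed.

Lemma sum_boolN k (b : 'I_k -> bool) :
  \sum_(p < k) b p + \sum_(p < k) ~~ b p = k.
Proof.
by rewrite -big_split /= -[RHS]card_ord -sum1_card; apply: eq_bigr => p _; case: (b p).
Qed.

Lemma half_double k : ~~ odd k -> k %/ 2 + k %/ 2 = k.
Proof. by move=> k_even; have := divn_eq k 2; rewrite modn2 (negPf k_even); lia. Qed.

Lemma eucl_uniq d q r q' r' : r < d -> r' < d ->
  q * d + r = q' * d + r' -> q = q' /\ r = r'.
Proof.
move=> lt_rd lt_r'd e; have d_gt0 : 0 < d by apply: leq_ltn_trans lt_rd.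
have eq_q : q = q'.
  by move: (congr1 (divn^~ d) e); rewrite !divnMDl // !divn_small // !addn0.
by split=> //; move: e; rewrite eq_q => /addnI.
Qed.

Section MultilinearDegree.
Local Open Scope ring_scope.
Variables (R : comNzRingType) (I : finType).
Implicit Types (S T U : {set I}) (x z : I -> bool) (f g : (I -> bool) -> R).

Definition monomial S x : R := [forall i in S, x i]%:R.

Definition mdeg_le d f : Prop :=
  exists c : {set I} -> R, (forall S, (d < #|S|)%N -> c S = 0) /\
    forall x, f x = \sum_S c S * monomial S x.

Lemma mdeg_le_ext d f g : mdeg_le d f -> f =1 g -> mdeg_le d g.
Proof. by move=> [c [c0 fE]] fg; exists c; split=> // x; rewrite -fg. Qed.

Lemma mdeg_le_leq d d' f : (d <= d')%N -> mdeg_le d f -> mdeg_le d' f.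
Proof.
move=> le_dd' [c [c0 fE]]; exists c; split=> // S lt_d'S.
by apply: c0; apply: leq_ltn_trans lt_d'S.
Qed.

Lemma mdeg_le_monomial d S : (#|S| <= d)%N -> mdeg_le d (monomial S).
Proof.
move=> le_Sd; exists (fun T => (T == S)%:R); split.
  by move=> T; case: eqP => // ->; rewrite ltnNge le_Sd.
move=> x; rewrite (bigD1 S) //= eqxx mul1r big1 ?addr0 // => T /negPf ->.
by rewrite mul0r.
Qed.

Lemma mdeg_le0 d : mdeg_le d (fun=> 0).
Proof. by exists (fun=> 0); split=> // x; rewrite big1 // => S _; rewrite mul0r. Qed.

Lemma mdeg_leD d f g :
  mdeg_le d f -> mdeg_le d g -> mdeg_le d (fun x => f x + g x).
Proof.
move=> [c [c0 fE]] [e [e0 gE]]; exists (fun S => c S + e S); split.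
  by move=> S lt_dS; rewrite c0 // e0 // addr0.
by move=> x; rewrite fE gE -big_split /=; apply: eq_bigr => S _; rewrite mulrDl.
Qed.

Lemma mdeg_leZ d a f : mdeg_le d f -> mdeg_le d (fun x => a * f x).
Proof.
move=> [c [c0 fE]]; exists (fun S => a * c S); split.
  by move=> S lt_dS; rewrite c0 // mulr0.
by move=> x; rewrite fE mulr_sumr; apply: eq_bigr => S _; rewrite mulrA.
Qed.

Lemma mdeg_le_sum d (J : finType) (F : J -> (I -> bool) -> R) :
  (forall j, mdeg_le d (F j)) -> mdeg_le d (fun x => \sum_j F j x).
Proof.
move=> Fd; elim: (index_enum J) => [|j s IH].
  by apply: mdeg_le_ext (mdeg_le0 d) _ => x; rewrite big_nil.
by apply: mdeg_le_ext (mdeg_leD (Fd j) IH) _ => x; rewrite big_cons.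
Qed.

Lemma monomialM S T x : monomial S x * monomial T x = monomial (S :|: T) x.
Proof.
rewrite /monomial -natrM mulnb.
congr (nat_of_bool _)%:R; apply/idP/idP.
  move=> /andP[/forall_inP xS /forall_inP xT]; apply/forall_inP => i.
  by rewrite in_setU => /orP[/xS | /xT].
move=> /forall_inP xST; apply/andP; split; apply/forall_inP => i iS;
  by apply: xST; rewrite in_setU iS ?orbT.
Qed.

Lemma mdeg_leM a b f g :
  mdeg_le a f -> mdeg_le b g -> mdeg_le (a + b) (fun x => f x * g x).
Proof.
move=> [c [c0 fE]] [e [e0 gE]].
have cross : mdeg_le (a + b)
    (fun x => \sum_S \sum_T c S * e T * monomial (S :|: T) x).
  apply: mdeg_le_sum => S; apply: mdeg_le_sum => T.
  have [le_Sa|lt_aS] := leqP #|S| a; last first.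
    by apply: mdeg_le_ext (mdeg_le0 _) _ => x; rewrite c0 // !mul0r.
  have [le_Tb|lt_bT] := leqP #|T| b; last first.
    by apply: mdeg_le_ext (mdeg_le0 _) _ => x; rewrite e0 // mulr0 mul0r.
  apply/mdeg_leZ/mdeg_le_monomial.
  by apply: leq_trans (leq_card_setU _ _) _; apply: leq_add.
apply: mdeg_le_ext cross _ => x; rewrite fE gE mulr_suml; apply: eq_bigr => S _.
by rewrite mulr_sumr; apply: eq_bigr => T _; rewrite -monomialM mulrACA.
Qed.

Lemma monomial_set0 x : monomial set0 x = 1.
Proof. by rewrite /monomial (introT forall_inP) // => i; rewrite inE. Qed.

Lemma mdeg_le_cst d a : mdeg_le d (fun=> a).
Proof.
have card_set0 : (#|(set0 : {set I})| <= d)%N by rewrite cards0.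
apply: mdeg_le_ext (mdeg_leZ a (mdeg_le_monomial card_set0)) _ => x.
by rewrite monomial_set0 mulr1.
Qed.

Lemma mdeg_le_var i : mdeg_le 1 (fun x => (x i)%:R).
Proof.
have card_i : (#|[set i]| <= 1)%N by rewrite cards1.
apply: mdeg_le_ext (mdeg_le_monomial card_i) _ => x.
rewrite /monomial; congr (nat_of_bool _)%:R.
by apply/forall_inP/idP => [-> //|xi j]; rewrite ?inE // => /eqP ->.
Qed.

Lemma mdeg_le_negvar i : mdeg_le 1 (fun x => (~~ x i)%:R).
Proof.
apply: mdeg_le_ext (mdeg_leD (mdeg_le_cst 1 1) (mdeg_leZ (-1) (mdeg_le_var i))) _.
by move=> x; case: (x i); rewrite /= ?mulr1 ?mulr0 ?addr0 ?subrr.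
Qed.

Lemma monomial_prod S x : monomial S x = \prod_(i in S) (x i)%:R.
Proof.
rewrite /monomial.
have [/forall_inP xS | /forall_inPn [i iS /negPf xi]] := boolP [forall i in S, x i].
  by rewrite big1 // => i /xS ->.
by rewrite (bigD1 i) //= xi mul0r.
Qed.

Lemma mdeg_le_comp d (phi : (I -> bool) -> I -> bool) f :
  (forall i, mdeg_le 1 (fun z => (phi z i)%:R)) -> mdeg_le d f ->
  mdeg_le d (fun z => f (phi z)).
Proof.
move=> phid [c [c0 fE]].
have prodd (s : seq I) : mdeg_le (size s) (fun z => \prod_(i <- s) (phi z i)%:R).
  elim: s => [|i s IH].
    by apply: mdeg_le_ext (mdeg_le_cst 0 1) _ => z; rewrite big_nil.
  by apply: mdeg_le_ext (mdeg_leM (phid i) IH) _ => z; rewrite big_cons.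
have sumd : mdeg_le d (fun z => \sum_S c S * monomial S (phi z)).
  apply: mdeg_le_sum => S; have [le_Sd|lt_dS] := leqP #|S| d; last first.
    by apply: mdeg_le_ext (mdeg_le0 _) _ => z; rewrite c0 // mul0r.
  apply/mdeg_leZ; rewrite cardE in le_Sd.
  apply: mdeg_le_ext (mdeg_le_leq le_Sd (prodd (enum S))) _ => z.
  by rewrite monomial_prod big_enum.
by apply: mdeg_le_ext sumd _ => z; rewrite fE.
Qed.

(* By induction on proper subsets, the value of f on the indicator of S
   determines the coefficient of S. *)
Lemma mdeg_le_eq0 d f : mdeg_le d f ->
  (forall U, (#|U| <= d)%N -> f (fun i => i \in U) = 0) -> forall x, f x = 0.
Proof.
move=> [c [c0 fE]] fU0.
have c_ind S : (forall T, T \proper S -> c T = 0) -> c S = 0.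
  move=> cT0; have [le_Sd|] := leqP #|S| d; last exact: c0.
  have := fU0 S le_Sd; rewrite fE (bigD1 S) //= big1 ?addr0.
    by rewrite /monomial (introT forall_inP) ?mulr1.
  move=> T neTS; rewrite /monomial.
  have [/forall_inP sTS|] := boolP [forall i in T, i \in S]; last by rewrite mulr0.
  by rewrite cT0 ?mul0r // properEneq neTS; apply/subsetP.
have cS0 k S : (#|S| < k)%N -> c S = 0.
  elim: k S => [//|k IH] S lt_Sk; apply: c_ind => T /proper_card lt_TS.
  by apply: IH; apply: leq_trans lt_TS _.
by move=> x; rewrite fE big1 // => S _; rewrite (cS0 #|S|.+1) ?mul0r.
Qed.

(* Flip the bits of x on the positions e: the resulting polynomial of degree
   at most d vanishes on all inputs with at most d ones, which after the flip
   are the inputs with at least k - d >= h ones on e. *)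
Lemma mdeg_le_eq0_weight d h k (e : 'I_k -> I) (P : (I -> bool) -> Prop) f :
  injective e -> mdeg_le d f -> (d + h <= k)%N ->
  (forall x x', {in [predC codom e], x =1 x'} -> P x -> P x') ->
  (forall x, P x -> (h <= \sum_(p < k) x (e p))%N -> f x = 0) ->
  forall x, P x -> f x = 0.
Proof.
move=> inj_e fd le_dhk P_ext fP0 x Px.
pose flip z i := if i \in codom e then ~~ z i else x i.
have flipd : mdeg_le d (fun z => f (flip z)).
  apply: mdeg_le_comp fd => i; rewrite /flip; case: (i \in codom e).
    exact: mdeg_le_negvar.
  exact: mdeg_le_cst.
have -> : x = flip (fun i => ~~ x i).
  by apply: functional_extensionality => i; rewrite /flip; case: ifP; rewrite ?negbK.
apply: (mdeg_le_eq0 flipd) => U le_Ud; apply: fP0.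
  by apply: P_ext Px => i /negPf; rewrite /flip => ->.
have flip_e p : flip (fun i => i \in U) (e p) = (e p \notin U) by rewrite /flip codom_f.
under eq_bigr => p _ do rewrite flip_e.
have le_eU : (\sum_(p < k) (e p \in U) <= #|U|)%N.
  rewrite sum_bool_card -(card_imset _ inj_e); apply: subset_leq_card.
  by apply/subsetP => i /imsetP [p]; rewrite inE => eU ->.
move: le_eU (sum_boolN (fun p => e p \in U)).
set inU := (\sum_(p < k) _)%N; set outU := (\sum_(p < k) _)%N; lia.
Qed.

Lemma mdeg_le_eq0_indicator d (F : {set I}) (P : (I -> bool) -> Prop) f :
  mdeg_le d f -> (forall U, (#|U| <= d)%N -> P (fun i => i \in F :&: U)) ->
  (forall x, P x -> f x = 0) -> f (fun i => i \in F) = 0.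
Proof.
move=> fd PFU fP0.
have restrd : mdeg_le d (fun z => f (fun i => (i \in F) && z i)).
  apply: mdeg_le_comp fd => i; case: (i \in F).
    exact: mdeg_le_var.
  exact: mdeg_le_cst.
have -> : (fun i => i \in F) = (fun i => (i \in F) && true).
  by apply: functional_extensionality => i; rewrite andbT.
apply: (mdeg_le_eq0 restrd) => U /PFU PU; apply: fP0.
by move: PU; congr P; apply: functional_extensionality => i; rewrite inE.
Qed.

End MultilinearDegree.

Arguments mdeg_le_cst {R I} d a.
Arguments mdeg_le_var {R I} i.
Arguments mdeg_le_negvar {R I} i.

Section Blocks.
Variables m n : nat.
Local Notation N := (2 * m * n).
Implicit Types (x : 'I_N -> bool) (j : 'I_n) (b : bool) (p : 'I_m).

(* Bit p of the half b of block j ([b = false]: first half, [b = true]: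
   second half). *)
Lemma pos_subproof (j : 'I_n) (b : bool) (p : 'I_m) : j * (2 * m) + (b * m + p) < N.
Proof. by have := ltn_ord j; have := ltn_ord p; case: b; nia. Qed.

Definition pos j b p : 'I_N := Ordinal (pos_subproof j b p).

Lemma pos_inj j b p j' b' p' : pos j b p = pos j' b' p' -> [/\ j = j', b = b' & p = p'].
Proof.
move/(congr1 val) => /=.
have half_lt (c : bool) (q : 'I_m) : c * m + q < 2 * m by have := ltn_ord q; case: c; lia.
case/(eucl_uniq (half_lt b p) (half_lt b' p')) => /val_inj ->.
case/(eucl_uniq (ltn_ord p) (ltn_ord p')) => eq_b /val_inj ->.
by split=> //; move: eq_b; case: b; case: b'.
Qed.

Lemma block_pos (x : 'I_N -> bool) j b p : block m x j (b * m + p) = x (pos j b p).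
Proof. by rewrite /block /bitx (insubT (fun k => k < N) (pos_subproof j b p)). Qed.

Definition half_wt (x : 'I_N -> bool) j b := \sum_(p < m) x (pos j b p).

Lemma half_wt_le x j b : half_wt x j b <= m.
Proof.
rewrite -[leqRHS]card_ord -sum1_card; apply: leq_sum => p _; exact: leq_b1.
Qed.

Lemma half_wt_eq0 x j b : (half_wt x j b == 0) = [forall p, ~~ x (pos j b p)].
Proof. by rewrite sum_nat_eq0; apply: eq_forallb => p; case: (x _). Qed.

Lemma half_wt_ext x x' j b : (forall p, x (pos j b p) = x' (pos j b p)) ->
  half_wt x j b = half_wt x' j b.
Proof. by move=> xx'; apply: eq_bigr => p _; rewrite xx'. Qed.

Lemma inA_blockE x j b : inA m b (block m x j) =
  (half_wt x j (~~ b) == 0) && (m %/ 2 <= half_wt x j b).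
Proof.
have fstE p : block m x j p = x (pos j false p) by rewrite -block_pos mul0n.
have sndE p : block m x j (m + p) = x (pos j true p) by rewrite -block_pos mul1n.
rewrite half_wt_eq0 /half_wt; case: b; rewrite /inA /inA0 /inA1 /=.
  under eq_forallb => p do rewrite fstE; under eq_bigr => p _ do rewrite sndE.
  by rewrite -/(half_wt x j true) half_wt_le andbT.
under eq_forallb => p do rewrite sndE; under eq_bigr => p _ do rewrite fstE.
by rewrite -/(half_wt x j false) half_wt_le andbT.
Qed.

(* The conditions [inA (y j)] on every block j, with the weight condition
   dropped on the blocks in s. *)
Definition tame (y : 'I_n -> bool) (s : seq 'I_n) x : Prop :=
  forall j, half_wt x j (~~ y j) = 0 /\ (j \in s \/ m %/ 2 <= half_wt x j (y j)).

Lemma X0_tame x : X0 x <->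
  exists2 y : 'I_n -> bool, \sum_(j < n) y j = n %/ 2 & tame y [::] x.
Proof.
split=> [[y [wt_y xy]] | [y wt_y xy]].
  exists y => // j; move: (xy j); rewrite inA_blockE => /andP [/eqP ? ?].
  by split=> //; right.
by exists y; split=> // j; rewrite inA_blockE; have [-> [//|->]] := xy j.
Qed.

Section Vanishing.
Variables (R : comNzRingType) (d : nat) (f : ('I_N -> bool) -> R).
Hypotheses (fd : mdeg_le d f) (le_dm : d <= m %/ 2).
Hypothesis f_X0 : forall x, X0 x -> (f x = 0)%R.

Lemma tame_eq0_cons y j0 s :
  (forall x, tame y s x -> f x = 0)%R -> forall x, tame y (j0 :: s) x -> (f x = 0)%R.
Proof.
move=> f_s; have heavy_inj : injective (pos j0 (y j0)).
  by move=> p p' /pos_inj [].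
apply: (mdeg_le_eq0_weight heavy_inj fd (_ : d + m %/ 2 <= m)).
- by move: le_dm; lia.
- move=> x x' xx' tame_x j; have xx'_half b : b != y j0 \/ j != j0 ->
      half_wt x j b = half_wt x' j b.
    move=> neq; apply: half_wt_ext => p; apply: xx'; apply/negP => /codomP [q].
    by case/pos_inj => ej eb _; case: neq; rewrite ?ej ?eb eqxx.
  have [zero_x heavy_x] := tame_x j.
  rewrite -xx'_half; last by case: (eqVneq j j0) => [->|]; [left; case: (y j0)|right].
  split=> //; case: (eqVneq j j0) => [->|ne_jj0]; first by left; rewrite mem_head.
  by rewrite -xx'_half; last right.
- move=> x tame_x wt_heavy; apply: f_s => j; have [zero_x] := tame_x j.
  rewrite in_cons; case: (eqVneq j j0) => [ej|//] _.
  by split=> //; right; rewrite ej.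
Qed.

Lemma tame_eq0 (y : 'I_n -> bool) (s : seq 'I_n) : \sum_(j < n) y j = n %/ 2 ->
  forall x, tame y s x -> (f x = 0)%R.
Proof.
move=> wt_y; elim: s => [|j0 s IH]; last exact: tame_eq0_cons.
by move=> x tame_x; apply: f_X0; apply/X0_tame; exists y.
Qed.

End Vanishing.

Definition first_halves : {set 'I_N} := [set pos j false p | j : 'I_n, p : 'I_m].

Lemma pos_first_halves j b p : (pos j b p \in first_halves) = ~~ b.
Proof.
apply/imset2P/idP => [[j' p' _ _ /pos_inj [_ -> _]] // | ].
by case: b => // _; exists j p.
Qed.

Lemma X1_first_halves : X1 (fun i => i \in first_halves).
Proof.
move=> j; rewrite -[inA0 _ _]/(inA m false _) inA_blockE /half_wt.
under eq_bigr => p _ do rewrite pos_first_halves.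
under [X in _ <= X]eq_bigr => p _ do rewrite pos_first_halves.
by rewrite big1 // sum_nat_const card_ord muln1 leq_div.
Qed.

Lemma exists_subset_card (T : finType) (A : {set T}) k : k <= #|A| ->
  exists2 B : {set T}, B \subset A & #|B| = k.
Proof.
move=> le_kA; exists [set i in take k (enum A)].
  by apply/subsetP => i; rewrite inE => /mem_take; rewrite mem_enum.
by rewrite cardsE (card_uniqP _) ?take_uniq ?enum_uniq // size_takel // -cardE.
Qed.

Hypothesis n_gt0 : 0 < n.

Definition block_of (i : 'I_N) : 'I_n := insubd (Ordinal n_gt0) (i %/ (2 * m)).

Lemma block_of_pos j b p : block_of (pos j b p) = j.
Proof.
have lt_half : b * m + p < 2 * m by have := ltn_ord p; case: b; lia.
have div_pos : (j * (2 * m) + (b * m + p)) %/ (2 * m) = j.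
  by rewrite divnMDl ?divn_small ?addn0 //; lia.
by rewrite /block_of /= div_pos valKd.
Qed.

Lemma mdeg_le_eq0_first_halves (R : comNzRingType) d (f : ('I_N -> bool) -> R) :
  mdeg_le d f -> d <= n %/ 2 -> d <= m %/ 2 ->
  (forall x, X0 x -> (f x = 0)%R) -> (f (fun i => i \in first_halves) = 0)%R.
Proof.
move=> fd le_dn le_dm f_X0.
pose P x := exists2 y : 'I_n -> bool, \sum_(j < n) y j = n %/ 2 & tame y (enum 'I_n) x.
apply: (mdeg_le_eq0_indicator (P := P) fd); last first.
  by move=> x [y wt_y]; apply: (tame_eq0 fd le_dm f_X0 wt_y).
move=> U le_Ud.
pose touched := [set j | [exists p, pos j false p \in U]].
have le_touched : #|touched| <= n %/ 2.
  apply: leq_trans le_dn; apply: leq_trans le_Ud.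
  apply: leq_trans (leq_imset_card block_of U); apply: subset_leq_card.
  apply/subsetP => j; rewrite inE => /existsP [p pU].
  by apply/imsetP; exists (pos j false p); rewrite ?block_of_pos.
have [Y sub_Y card_Y] : exists2 Y : {set 'I_n}, Y \subset ~: touched & #|Y| = n %/ 2.
  apply: exists_subset_card; rewrite cardsCs setCK card_ord.
  by move: le_touched; set t := #|touched|; lia.
exists (fun j => j \in Y); first by rewrite sum_bool_card -card_Y; apply: eq_card => j; rewrite inE.
move=> j; split; last by left; rewrite mem_enum.
apply/eqP; rewrite half_wt_eq0; apply/forallP => p; rewrite inE pos_first_halves.
have [jY|//] := boolP (j \in Y).
by move: (subsetP sub_Y j jY); rewrite !inE => /existsPn /(_ p) /negPf ->.
Qed.

End Blocks.

Local Open Scope ring_scope.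

Lemma mdeg_le_oflip N w (a b : basisT N w) :
  mdeg_le 1 (fun x : 'I_N -> bool => (a == oflip x b)%:R : C).
Proof.
case: a => [[i bi] z]; case: b => [[i' bi'] z'] /=.
have [<-|ne_i] := eqVneq i i'; last first.
  by apply: mdeg_le_ext (mdeg_le_cst 1 0) _ => x; rewrite !xpair_eqE (negPf ne_i).
have [<-|ne_z] := eqVneq z z'; last first.
  by apply: mdeg_le_ext (mdeg_le_cst 1 0) _ => x; rewrite !xpair_eqE (negPf ne_z) andbF.
apply: (@mdeg_le_ext _ _ _ (fun x => (bi == bi' (+) x i)%:R)); last first.
  by move=> x; rewrite !xpair_eqE !eqxx andbT.
case: bi; case: bi'; [apply: mdeg_le_ext (mdeg_le_negvar i) _ | apply: mdeg_le_ext (mdeg_le_var i) _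
  | apply: mdeg_le_ext (mdeg_le_var i) _ | apply: mdeg_le_ext (mdeg_le_negvar i) _];
  by move=> x; case: (x i).
Qed.

Lemma mdeg_le_run N w (U : nat -> 'M[C]_(Defs.dim N w)) s0 t r :
  mdeg_le t (fun x => run U x s0 t r 0).
Proof.
elim: t r => [|t IH] r /=; first exact: mdeg_le_cst.
have step : mdeg_le t.+1 (fun x => \sum_c U t.+1 r c *
    \sum_c' (enum_val c == oflip x (enum_val c'))%:R * run U x s0 t c' 0).
  apply: mdeg_le_sum => c; apply: mdeg_leZ; apply: mdeg_le_sum => c'.
  exact: mdeg_leM (mdeg_le_oflip _ _) (IH c').
apply: mdeg_le_ext step _ => x; rewrite !mxE; apply: eq_bigr => c _.
by rewrite !mxE; congr (_ * _); apply: eq_bigr => c' _; rewrite !mxE.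
Qed.

Lemma NQ_alg_gt m n T : (0 < n)%N -> NQ_alg (@X1 m n) (@X0 m n) T ->
  (minn (n %/ 2) (m %/ 2) < T)%N.
Proof.
move=> n_gt0 [w [s0 [U [out [_ [acc1 acc0]]]]]].
rewrite ltnNge leq_min; apply/negP => /andP [le_Tn le_Tm].
pose x1 := fun i => i \in first_halves m n.
have amp0 s : out s == Some true -> run U x1 s0 T (enum_rank s) 0 = 0.
  move=> acc_s; apply: (mdeg_le_eq0_first_halves n_gt0 (mdeg_le_run _ _ _ _) le_Tn le_Tm).
  move=> x /acc0 /psumr_eq0P sum0; apply/eqP.
  by rewrite -normr_eq0 -sqrf_eq0 sum0 // => s' _; rewrite exprn_ge0.
have := acc1 _ (@X1_first_halves m n); rewrite /prob_out1 big1 ?ltxx // => s acc_s.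
by rewrite amp0 // normr0 expr0n.
Qed.

Section Operators.
Variable S : finType.
Local Notation d := #|S|.
Implicit Types (u v psi : 'cV[C]_d) (e : 'I_d).

Definition bket (s : S) : 'cV[C]_d := delta_mx (enum_rank s) 0.

Definition bra v : 'rV[C]_d := (map_mx Num.conj v)^T.

Definition inner u v : C := \sum_i (u i 0)^* * v i 0.

Definition perm_op (pi : S -> S) : 'M[C]_d :=
  \matrix_(r, c) (enum_val r == pi (enum_val c))%:R.

(* The Householder reflection in the hyperplane orthogonal to e_e - v; for a
   unit vector v orthogonal to e_e it swaps e_e and v. *)
Definition householder v e : 'M[C]_d :=
  1%:M - (delta_mx e 0 - v) *m bra (delta_mx e 0 - v).

Lemma enum_val_eq r (s : S) : (enum_val r == s) = (r == enum_rank s).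
Proof. by apply/eqP/eqP => [<-|->]; rewrite ?enum_valK ?enum_rankK. Qed.

Lemma perm_op_bket pi s : perm_op pi *m bket s = bket (pi s).
Proof.
apply/matrixP => r c; rewrite !mxE (bigD1 (enum_rank s)) //= big1 ?addr0.
  by rewrite !mxE enum_rankK eqxx (ord1 c) !andbT mulr1 enum_val_eq.
by move=> j /negPf nej; rewrite !mxE nej mulr0.
Qed.

Lemma unitary_mul (A B : 'M[C]_d) : unitary A -> unitary B -> unitary (A *m B).
Proof.
rewrite /unitary => uA uB.
rewrite (map_mxM (Num.conj : {rmorphism C -> C})) trmx_mul mulmxA -[A *m B *m _]mulmxA.
by rewrite uB mulmx1 uA.
Qed.

Lemma perm_op_unitary pi : involutive pi -> unitary (perm_op pi).
Proof.
move=> pi_inv; rewrite /unitary; apply/matrixP => r c.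
rewrite !mxE (bigD1 (enum_rank (pi (enum_val r)))) //= big1 ?addr0.
  by rewrite !mxE conjC_nat enum_rankK pi_inv eqxx mul1r enum_val_eq enum_valK eq_sym.
move=> j ne_j; rewrite !mxE conjC_nat.
suff -> : (enum_val r == pi (enum_val j)) = false by rewrite mul0r.
by apply/negP => /eqP erj; move: ne_j; rewrite erj pi_inv enum_valK eqxx.
Qed.

Lemma bra_mul u v : bra u *m v = (inner u v)%:M.
Proof.
apply/matrixP => i j; rewrite (ord1 i) (ord1 j) !mxE.
by apply: eq_bigr => k _; rewrite !mxE.
Qed.

Lemma inner_ge0 v : 0 <= inner v v.
Proof. by apply: sumr_ge0 => i _; rewrite mulrC mul_conjC_ge0. Qed.

Lemma inner_eq0 v i : inner v v = 0 -> v i 0 = 0.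
Proof.
move/psumr_eq0P => v0; apply/eqP; rewrite -mul_conjC_eq0 mulrC; apply/eqP.
by apply: v0 => // j _; rewrite mulrC mul_conjC_ge0.
Qed.

Lemma inner_normalized v : inner v v != 0 ->
  let c := (sqrtC (inner v v))^-1 in
  [/\ inner (c *: v) (c *: v) = 1, c^* = c & c != 0].
Proof.
move=> v_nz c.
have c_real : c^* = c.
  by apply: conj_Creal; rewrite rpredV; apply: sqrtC_real; exact: inner_ge0.
have cc : c * c = (inner v v)^-1 by rewrite -expr2 exprVn sqrtCK.
split=> //; last by rewrite invr_eq0 sqrtC_eq0.
rewrite /inner; under eq_bigr => i _ do rewrite !mxE rmorphM /= c_real mulrACA cc.
by rewrite -mulr_sumr -/(inner v v) mulVf.
Qed.

Section Householder.
Variables (v : 'cV[C]_d) (e : 'I_d).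
Hypothesis v_e : v e 0 = 0.
Local Notation u := (delta_mx e 0 - v).

Lemma householder_adj : (map_mx Num.conj (householder v e))^T = householder v e.
Proof.
have self_adj : (map_mx Num.conj (u *m bra u))^T = u *m bra u.
  apply/matrixP => i j; rewrite !mxE (bigD1 0) //= big1 ?addr0; last by move=> k; rewrite (ord1 k).
  rewrite (bigD1 0) //= big1 ?addr0; last by move=> k; rewrite (ord1 k).
  by rewrite !mxE rmorphM /= conjCK mulrC.
by rewrite map_mxB map_mx1 linearB /= trmx1 self_adj.
Qed.

Lemma inner_delta psi : inner u psi = psi e 0 - inner v psi.
Proof.
have termE i : (u i 0)^* * psi i 0 = (i == e)%:R * psi i 0 - (v i 0)^* * psi i 0.
  by rewrite !mxE rmorphB mulrBl eqxx andbT; case: (i == e); rewrite ?rmorph1 ?rmorph0.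
rewrite /inner; under eq_bigr => i _ do rewrite termE.
by rewrite sumrB (bigD1 e) //= eqxx mul1r big1 ?addr0 // => i /negPf ->; rewrite mul0r.
Qed.

Lemma householder_unitary : inner v v = 1 -> unitary (householder v e).
Proof.
move=> v1; rewrite /unitary householder_adj /householder.
have uu : inner u u = 2.
  have termE i : (u i 0)^* * u i 0 = (v i 0)^* * v i 0 + (i == e)%:R.
    rewrite !mxE eqxx andbT; have [->|nei] := eqVneq i e.
      by rewrite v_e subr0 rmorph1 !mulr1 mulr0 add0r.
    by rewrite sub0r rmorphN mulrNN addr0.
  rewrite /inner; under eq_bigr => i _ do rewrite termE.
  rewrite big_split /= -/(inner v v) v1 (bigD1 e) //= eqxx big1 ?addr0 //.
  by move=> i /negPf ->.
rewrite mulmxBl mul1mx mulmxBr mulmx1 -!mulmxA [bra u *m (u *m bra u)]mulmxA bra_mul.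
rewrite uu mul_scalar_mx -scalemxAr scaler_nat mulr2n.
set X := u *m bra u.
have -> : X - (X + X) = - X by rewrite opprD addrA subrr add0r.
by rewrite opprK subrK.
Qed.

Lemma householder_delta : householder v e *m delta_mx e 0 = v.
Proof.
have u_e : inner u (delta_mx e 0) = 1.
  rewrite /inner (bigD1 e) //= big1 ?addr0.
    by rewrite !mxE !eqxx v_e subr0 rmorph1 mulr1.
  by move=> i /negPf nei; rewrite !mxE nei mulr0.
by rewrite /householder mulmxBl mul1mx -mulmxA bra_mul u_e mulmx1 opprB addrC subrK.
Qed.

Lemma householder_amp psi : (householder v e *m psi) e 0 = inner v psi.
Proof.
rewrite /householder mulmxBl mul1mx -mulmxA bra_mul inner_delta !mxE.
rewrite (bigD1 0) //= big1 ?addr0; last by move=> k; rewrite (ord1 k).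
by rewrite !mxE !eqxx v_e subr0 mul1r mulr1n opprB addrC subrK.
Qed.

End Householder.
End Operators.

(* The algorithm prepares sum_k alpha k |path k 0, 0, (k, 0...0)>, follows
   every path classically while recording the answers in the workspace, and
   finally reflects the state with amplitudes beta of the answer strings onto
   the accepting basis state, whose amplitude is then proportional to the
   inner product [path_amp]. *)
Section PathAlgorithm.
Variables (N T : nat) (K : finType) (path : K -> nat -> 'I_N).
Variables (alpha : K -> C) (beta : K -> {ffun 'I_T -> bool} -> C).
Hypothesis T_gt0 : (0 < T)%N.
Variable k0 : K.
Hypothesis alpha_k0 : alpha k0 != 0.
Hypothesis beta_nz : exists k a, beta k a != 0.

Definition path_amp (x : 'I_N -> bool) : C :=
  \sum_k alpha k * (beta k [ffun o : 'I_T => x (path k o)])^*.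

Local Notation W := (K * {ffun 'I_T -> bool})%type.
Local Notation w := #|{: W}|.
Local Notation S := (basisT N w).

Definition answers0 : {ffun 'I_T -> bool} := [ffun=> false].
Definition wreg k a : 'I_w := enum_rank ((k, a) : W).

(* [rd a t] is the recorded answer to query t (junk [false] for t >= T). *)
Definition rd (a : {ffun 'I_T -> bool}) (t : nat) : bool :=
  if insub t is Some o then a o else false.
Definition upd (a : {ffun 'I_T -> bool}) (t : nat) (b : bool) : {ffun 'I_T -> bool} :=
  [ffun o => if val o == t then b else a o].
Definition swap_ord (p q i : 'I_N) := if i == p then q else if i == q then p else i.

(* The answer bit of [start] is set, so [start] is orthogonal to [prep] and
   [test] and the reflections below exchange it with them. *)
Definition start : S := (path k0 0, true, wreg k0 answers0).
Definition start_idx : 'I_#|{: S}| := enum_rank start.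

(* Step t >= 1 stores the answer to query t - 1 and moves the query register
   from path k (t - 1) to path k t. *)
Definition step (t : nat) (s : S) : S :=
  let: (i, b, z) := s in let: (k, a) := enum_val z in
  (swap_ord (path k t.-1) (path k t) i, rd a t.-1, wreg k (upd a t.-1 b)).

Definition prep0 : 'cV[C]_#|{: S}| :=
  \sum_k alpha k *: bket (path k 0, false, wreg k answers0).
Definition prep_scale := (sqrtC (inner prep0 prep0))^-1.
Definition prep := prep_scale *: prep0.
Definition test0 : 'cV[C]_#|{: S}| :=
  \sum_(ka : W) beta ka.1 ka.2 *: bket (path ka.1 T, false, wreg ka.1 ka.2).
Definition test_scale := (sqrtC (inner test0 test0))^-1.
Definition test := test_scale *: test0.

Definition path_unitary (t : nat) : 'M[C]_#|{: S}| :=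
  if t == 0%N then householder prep start_idx
  else if (t < T)%N then perm_op (step t)
  else if t == T then householder test start_idx *m perm_op (step T) else 1%:M.

Definition path_out (s : S) : option bool := Some (s == start).

Lemma rd_upd a t b : (t < T)%N -> rd (upd a t b) t = b.
Proof. by move=> lt_tT; rewrite /rd insubT /= ffunE eqxx. Qed.

Lemma upd_upd_rd a t b : (t < T)%N -> upd (upd a t b) t (rd a t) = a.
Proof.
move=> lt_tT; apply/ffunP => o; rewrite !ffunE /rd insubT /=.
by case: eqP => // eo; congr (a _); apply: val_inj.
Qed.

Lemma swap_ord_inv p q : involutive (swap_ord p q).
Proof.
move=> i; rewrite /swap_ord; have [->|nep] := eqVneq i p.
  by rewrite eqxx; case: (eqVneq q p) => [->|]; rewrite ?eqxx.
have [->|neq] := eqVneq i q; first by rewrite eqxx.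
by rewrite (negPf nep) (negPf neq).
Qed.

Lemma step_inv t : (0 < t <= T)%N -> involutive (step t).
Proof.
move=> t_range [[i b] z]; rewrite /step.
case ez: (enum_val z) => [k a]; have lt_tT : (t.-1 < T)%N by lia.
by rewrite /wreg enum_rankK rd_upd // upd_upd_rd // swap_ord_inv -ez enum_valK.
Qed.

Lemma bkets_entry (J : finType) (c : J -> C) (f : J -> S) r :
  (\sum_j c j *: bket (f j)) r 0 = \sum_j c j * (r == enum_rank (f j))%:R.
Proof. by rewrite summxE; apply: eq_bigr => j _; rewrite !mxE eqxx andbT. Qed.

Lemma bkets_start (J : finType) (c : J -> C) (f : J -> S) :
  (forall j, (f j).1.2 = false) -> (\sum_j c j *: bket (f j)) start_idx 0 = 0.
Proof.
move=> bit_f; rewrite bkets_entry big1 // => j _.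
suff -> : (start_idx == enum_rank (f j)) = false by rewrite mulr0.
by apply/negP => /eqP /(can_inj enum_rankK) fjE; have := bit_f j; rewrite -fjE.
Qed.

Lemma prep_start : prep start_idx 0 = 0.
Proof. by rewrite mxE bkets_start ?mulr0. Qed.

Lemma test0_start : test0 start_idx 0 = 0.
Proof. exact: bkets_start. Qed.

Lemma test_start : test start_idx 0 = 0.
Proof. by rewrite mxE test0_start mulr0. Qed.

Lemma test0_entry k a : test0 (enum_rank ((path k T, false, wreg k a) : S)) 0 = beta k a.
Proof.
rewrite bkets_entry (bigD1 (k, a)) //= eqxx mulr1 big1 ?addr0 // => -[k' a'] ne_ka.
rewrite (inj_eq enum_rank_inj) /wreg xpair_eqE (inj_eq enum_rank_inj).
by rewrite [(k, a) == _]eq_sym (negPf ne_ka) andbF mulr0.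
Qed.

Lemma inner_nz (v : 'cV[C]_#|{: S}|) r : v r 0 != 0 -> inner v v != 0.
Proof. by move=> vr; apply: contra vr => /eqP /(inner_eq0 r) ->. Qed.

Lemma prep0_nz : inner prep0 prep0 != 0.
Proof.
apply: (@inner_nz _ (enum_rank ((path k0 0, false, wreg k0 answers0) : S))).
rewrite bkets_entry (bigD1 k0) //= eqxx mulr1 big1 ?addr0 // => k ne_k.
rewrite (inj_eq enum_rank_inj) /wreg xpair_eqE (inj_eq enum_rank_inj).
by rewrite !xpair_eqE [k0 == _]eq_sym (negPf ne_k) !andbF mulr0.
Qed.

Lemma test0_nz : inner test0 test0 != 0.
Proof.
have [k [a bka]] := beta_nz.
by apply: (@inner_nz _ (enum_rank ((path k T, false, wreg k a) : S))); rewrite test0_entry.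
Qed.

Definition answers (t : nat) (k : K) (x : 'I_N -> bool) : {ffun 'I_T -> bool} :=
  [ffun o : 'I_T => (o < t)%N && x (path k o)].

Definition path_state (t : nat) (k : K) (x : 'I_N -> bool) : S :=
  (path k t, false, wreg k (answers t k x)).

Lemma step_query t k x : (t < T)%N ->
  step t.+1 (oflip x (path_state t k x)) = path_state t.+1 k x.
Proof.
move=> lt_tT; rewrite /path_state /step /= /wreg enum_rankK /= /swap_ord eqxx.
rewrite /rd insubT /= ffunE ltnn /=; congr (_, _, enum_rank (_, _)).
apply/ffunP => o; rewrite !ffunE ltnS.
by have [->|ne_ot] := eqVneq (val o) t; rewrite ?leqnn // ltn_neqAle ne_ot.
Qed.

Lemma perm_op_bkets (pi : S -> S) c (f : K -> S) :
  perm_op pi *m (c *: \sum_k alpha k *: bket (f k)) = c *: \sum_k alpha k *: bket (pi (f k)).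
Proof.
rewrite -scalemxAr mulmx_sumr; congr (_ *: _); apply: eq_bigr => k _.
by rewrite -scalemxAr perm_op_bket.
Qed.

Lemma run_path x t : (t < T)%N ->
  run path_unitary x start t = prep_scale *: \sum_k alpha k *: bket (path_state t k x).
Proof.
elim: t => [_|t IH lt_tT] /=.
  by rewrite /path_unitary /= /ket -/start_idx householder_delta ?prep_start.
rewrite IH ?(ltnW lt_tT) // /path_unitary /= lt_tT.
rewrite (_ : oracle _ x = perm_op (oflip x)) // !perm_op_bkets.
by congr (_ *: _); apply: eq_bigr => k _; rewrite step_query ?(ltnW lt_tT).
Qed.

Lemma run_final x : run path_unitary x start T =
  householder test start_idx *m (prep_scale *: \sum_k alpha k *: bket (path_state T k x)).
Proof.
have TE : T.-1.+1 = T by lia.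
have -> : run path_unitary x start T =
    path_unitary T *m (oracle _ x *m run path_unitary x start T.-1).
  by rewrite (f_equal (run path_unitary x start) (esym TE)) /= (f_equal path_unitary TE).
rewrite run_path ?prednK // ?ltn_predL // /path_unitary ltnn eqxx.
rewrite (_ : (T == 0)%N = false); last by lia.
rewrite (_ : oracle _ x = perm_op (oflip x)) // perm_op_bkets -mulmxA perm_op_bkets.
congr (_ *m (_ *: _)); apply: eq_bigr => k _.
have := step_query k x (_ : T.-1 < T)%N; rewrite TE => -> //; lia.
Qed.

Lemma run_final_start x : run path_unitary x start T start_idx 0 =
  prep_scale * test_scale * path_amp x.
Proof.
rewrite run_final householder_amp ?test_start // /inner.
have stateE i : (prep_scale *: \sum_k alpha k *: bket (path_state T k x)) i 0 =
    prep_scale * \sum_k alpha k * (i == enum_rank (path_state T k x))%:R.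
  by rewrite mxE bkets_entry.
under eq_bigr => i _ do rewrite stateE mulrCA mulr_sumr.
rewrite -mulr_sumr exchange_big /= -mulrA; congr (_ * _).
rewrite /path_amp mulr_sumr; apply: eq_bigr => k _.
rewrite (bigD1 (enum_rank (path_state T k x))) //= eqxx mulr1 big1 ?addr0; last first.
  by move=> i /negPf ->; rewrite !mulr0.
have [_ scale_real _] := inner_normalized test0_nz.
rewrite /test mxE test0_entry rmorphM /= scale_real.
have -> : answers T k x = [ffun o : 'I_T => x (path k o)].
  by apply/ffunP => o; rewrite !ffunE ltn_ord.
by rewrite -mulrA [_ * alpha k]mulrC.
Qed.

Lemma path_prob x : prob_out1 path_unitary path_out x start T =
  `|prep_scale * test_scale * path_amp x| ^+ 2.
Proof.
rewrite /prob_out1 (eq_bigl (pred1 start)) => [|s]; last first.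
  by rewrite /path_out /=; case: (s == start).
by rewrite big_pred1_eq run_final_start.
Qed.

Theorem NQ_alg_path_amp (F1 F0 : ('I_N -> bool) -> Prop) :
  (forall x, F1 x -> path_amp x != 0) -> (forall x, F0 x -> path_amp x = 0) ->
  NQ_alg F1 F0 T.
Proof.
move=> amp1 amp0; exists w, start, path_unitary, path_out; split; last split.
- move=> t le_tT; rewrite /path_unitary; have [_|t_nz] := eqVneq t 0%N.
    have [prep_unit _ _] := inner_normalized prep0_nz.
    exact: householder_unitary prep_start prep_unit.
  case: ifP => lt_tT; first by apply/perm_op_unitary/step_inv; lia.
  rewrite (_ : t == T); last by lia.
  apply: unitary_mul; last by apply/perm_op_unitary/step_inv; lia.
  have [test_unit _ _] := inner_normalized test0_nz.
  exact: householder_unitary test_start test_unit.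
- move=> x /amp1 amp_nz; rewrite path_prob exprn_gt0 // normr_gt0.
  have [_ _ prep_nz] := inner_normalized prep0_nz.
  have [_ _ test_nz] := inner_normalized test0_nz.
  by rewrite !mulf_neq0.
- by move=> x /amp0 amp_0; rewrite path_prob amp_0 mulr0 normr0 expr0n.
Qed.

End PathAlgorithm.

Section Algorithms.
Variables m n : nat.
Hypotheses (m_gt0 : (0 < m)%N) (m_even : ~~ odd m) (n_gt0 : (0 < n)%N) (n_even : ~~ odd n).
Local Notation N := (2 * m * n)%N.

Lemma card_zeros (y : 'I_n -> bool) : (\sum_(j < n) y j)%N = (n %/ 2)%N ->
  #|[set j | ~~ y j]| = (n %/ 2)%N.
Proof.
move=> wt_y; have := sum_boolN y; rewrite wt_y sum_bool_card.
by have := half_double n_even; lia.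
Qed.

Section AcrossBlocks.
Local Notation T := (n %/ 2).+1.

Definition blk (t : nat) : 'I_n := insubd (Ordinal n_gt0) t.

Lemma blk_inj : {in gtn T &, injective blk}.
Proof.
move=> t t' lt_t lt_t' /(congr1 val); rewrite /blk !val_insubd.
have := half_double n_even; move: lt_t lt_t'; rewrite !unfold_in /=.
by do 2 case: ifP; lia.
Qed.

Definition across_path (k : {ffun 'I_T -> 'I_m}) (t : nat) : 'I_N :=
  pos (blk t) false (k (inord t)).

Definition all_ones (k : {ffun 'I_T -> 'I_m}) (a : {ffun 'I_T -> bool}) : C :=
  [forall o, a o]%:R.

Lemma across_amp x : path_amp across_path (fun=> 1) all_ones x =
  (\sum_(k : {ffun 'I_T -> 'I_m}) [forall o : 'I_T, x (across_path k o)])%:R.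
Proof.
rewrite natr_sum; apply: eq_bigr => k _; rewrite mul1r conjC_nat /all_ones.
by under eq_forallb => o do rewrite ffunE.
Qed.

Lemma NQ_alg_across_blocks : NQ_alg (@X1 m n) (@X0 m n) T.
Proof.
pose k0 : {ffun 'I_T -> 'I_m} := [ffun=> Ordinal m_gt0].
apply: (@NQ_alg_path_amp _ _ _ across_path (fun=> 1) all_ones (ltn0Sn _) k0 (oner_neq0 _)).
- exists k0, [ffun=> true]; rewrite /all_ones.
  suff -> : [forall o, ([ffun=> true] : {ffun 'I_T -> bool}) o] by exact: oner_neq0.
  by apply/forallP => o; rewrite ffunE.
- move=> x x_X1; rewrite across_amp pnatr_eq0 -lt0n.
  have one_in_block (j : 'I_n) : exists p, x (pos j false p).
    have := x_X1 j; rewrite -[inA0 _ _]/(inA m false _) inA_blockE => /andP [_].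
    rewrite /half_wt => heavy; apply/existsP; apply: contraTT heavy => /existsPn no_one.
    rewrite -ltnNge big1 => [|p _]; last by rewrite (negPf (no_one p)).
    by rewrite divn_gt0 //; have := half_double m_even; lia.
  pose k : {ffun 'I_T -> 'I_m} :=
    [ffun o : 'I_T => odflt (Ordinal m_gt0) [pick p | x (pos (blk o) false p)]].
  rewrite (bigD1 k) //= ltn_addr // lt0b; apply/forallP => o.
  rewrite /across_path inord_val ffunE; case: pickP => [p //|no_one].
  by have [p xp] := one_in_block (blk o); move: (no_one p); rewrite xp.
- move=> x /X0_tame [y wt_y y_x]; rewrite across_amp.
  suff [o y_o] : exists o : 'I_T, y (blk o).
    rewrite big1 // => k _; apply/eqP; rewrite eqb0; apply/forallPn; exists o.
    have [/eqP] := y_x (blk o); rewrite y_o half_wt_eq0 => /forallP /(_ (k o)).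
    by rewrite /across_path inord_val.
  apply/existsP; apply: contraT => /existsPn no_y.
  have : (T <= #|[set j | ~~ y j]|)%N.
    rewrite -[X in (X <= _)%N]card_ord -(card_in_imset (f := fun o : 'I_T => blk o)).
      apply/subset_leq_card/subsetP => j /imsetP [o _ ->]; rewrite inE; exact: no_y.
    by move=> o o' _ _ /blk_inj => /(_ (ltn_ord o) (ltn_ord o')) /val_inj.
  by rewrite card_zeros // ltnn.
Qed.

End AcrossBlocks.

Section WithinBlock.
Local Notation T := (m %/ 2).+1.
Local Notation K := ('I_n * {ffun 'I_T -> 'I_m})%type.

Definition within_path (k : K) (t : nat) : 'I_N := pos k.1 true (k.2 (inord t)).
Definition injective_sel (k : K) : C := (injectiveb k.2)%:R.
Definition zeros_sign (k : K) (a : {ffun 'I_T -> bool}) : C :=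
  (2 * [forall o, ~~ a o])%:R - 1.

Lemma T_le_m : (T <= m)%N.
Proof. by have := half_double m_even; lia. Qed.

Definition first_bits : {ffun 'I_T -> 'I_m} := [ffun o => widen_ord T_le_m o].

Lemma first_bits_inj : injectiveb first_bits.
Proof. by apply/injectiveP => o o'; rewrite !ffunE => /(congr1 val) /= /val_inj. Qed.

Definition n_sel : C := (\sum_(p : {ffun 'I_T -> 'I_m}) injectiveb p)%:R.

Lemma block_sign (x : 'I_N -> bool) (j : 'I_n) b (p : {ffun 'I_T -> 'I_m}) : injectiveb p ->
  inA m b (block m x j) -> [forall o, ~~ x (pos j true (p o))] = ~~ b.
Proof.
move=> /injectiveP p_inj; rewrite inA_blockE => /andP [/eqP zero heavy].
case: b zero heavy => /= [_ heavy|]; last first.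
  by move/eqP; rewrite half_wt_eq0 => /forallP zero _; apply/forallP => o; exact: zero.
apply/negP => /forallP all_zero; move: heavy; rewrite /half_wt sum_bool_card.
set ones := [set q | x (pos j true q)] => heavy.
have : (T <= #|~: ones|)%N.
  rewrite -[X in (X <= _)%N]card_ord -(card_imset _ p_inj).
  by apply/subset_leq_card/subsetP => q /imsetP [o _ ->]; rewrite !inE; exact: all_zero.
rewrite cardsCs setCK card_ord; move: heavy; have := half_double m_even.
by set c := #|ones|; lia.
Qed.

Lemma within_amp (x : 'I_N -> bool) (y : 'I_n -> bool) : (forall j, inA m (y j) (block m x j)) ->
  path_amp within_path injective_sel zeros_sign x =
  n_sel * \sum_(j < n) ((2 * ~~ y j)%:R - 1).
Proof.
move=> x_y; rewrite /path_amp -(pair_bigA _ (fun j p => injective_sel (j, p) *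
  (zeros_sign (j, p) [ffun o : 'I_T => x (within_path (j, p) o)])^*)) /=.
rewrite mulr_sumr; apply: eq_bigr => j _.
rewrite /n_sel natr_sum mulr_suml; apply: eq_bigr => p _.
rewrite /injective_sel /zeros_sign /=.
have [p_inj|_] := boolP (injectiveb p); last by rewrite !mul0r.
rewrite mul1r rmorphB rmorph1 /= conjC_nat.
under eq_forallb => o do rewrite ffunE /within_path inord_val.
by rewrite (block_sign p_inj (x_y j)) mul1r.
Qed.

Lemma NQ_alg_within_block : NQ_alg (@X1 m n) (@X0 m n) T.
Proof.
pose k0 : K := (Ordinal n_gt0, first_bits).
apply: (@NQ_alg_path_amp _ _ _ within_path injective_sel zeros_sign (ltn0Sn _) k0).
- by rewrite /injective_sel first_bits_inj oner_neq0.
- exists k0, [ffun=> false]; rewrite /zeros_sign.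
  suff -> : [forall o, ~~ ([ffun=> false] : {ffun 'I_T -> bool}) o].
    by rewrite muln1 mulr2n addrK oner_neq0.
  by apply/forallP => o; rewrite ffunE.
- move=> x x_X1; rewrite (@within_amp x (fun=> false)) // mulf_neq0 //.
    by rewrite pnatr_eq0 -lt0n (bigD1 first_bits) //= first_bits_inj.
  under eq_bigr => j _ do rewrite /= muln1 (_ : 2%:R - 1 = 1 :> C) ?mulr2n ?addrK //.
  by rewrite sumr_const card_ord pnatr_eq0 -lt0n.
- move=> x [y [wt_y x_y]]; rewrite (within_amp x_y) sumrB -natr_sum sumr_const card_ord.
  by rewrite -big_distrr /= sum_bool_card card_zeros // mul2n -addnn half_double // subrr mulr0.
Qed.

End WithinBlock.
End Algorithms.

Local Close Scope ring_scope.

Theorem theorem1 (m n : nat) (hm : (0 < m)%N) (hme : ~~ odd m)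
    (hn : (0 < n)%N) (hne : ~~ odd n) :
  @NQ_is (2 * m * n) (@X1 m n) (@X0 m n) (minn (n %/ 2) (m %/ 2)).+1.
Proof.
split; last by move=> T /(NQ_alg_gt hn).
have [_ | _] := leqP (n %/ 2) (m %/ 2).
  exact: NQ_alg_across_blocks.
exact: NQ_alg_within_block.
Qed.
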